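(* Let $r_1,\dots,r_n$ be pairwise distinct integers, $v_1,\dots,v_n\in\mathbb{N}\cup\{\infty\}$, and $d=\gcd(r_1,\dots,r_n)$. Let $f\in F\langle X|\mathbb{Z}\rangle$ be a multilinear polynomial. Then $f\in T_{\mathbb{Z}}(E_{(r_1/d,\dots,r_n/d)}^{(v_1,\dots,v_n)})$ if and only if $\Phi_d(f)\in T_{d\mathbb{Z}}(E_{(r_1,\dots,r_n)}^{(v_1,\dots,v_n)})$, where $E_{(r_1,\dots,r_n)}^{(v_1,\dots,v_n)}$ is regarded as a $d\mathbb{Z}$-graded algebra.
   Context: $F$ is a field of characteristic zero; $E$ is the Grassmann algebra of an infinite-dimensional $F$-vector space with basis $e_1,e_2,\dots$. For pairwise distinct integers $s_j$ and $v_j\in\mathbb{N}\cup\{\infty\}$, $E_{(s_1,\dots,s_n)}^{(v_1,\dots,v_n)}$ is the $\mathbb{Z}$-grading obtained by splitting $\{e_i\}$ into $n$ disjoint sets of cardinalities $v_1,\dots,v_n$, giving elements of the $j$-th set degree $s_j$ and monomials the sum of degrees; when all $s_j\in d\mathbb{Z}$ its components are indexed by $d\mathbb{Z}$. For a group $G$, $F\langle X|G\rangle$ is the free associative algebra on variables $x_i^g$ of degree $g$, and $T_G(A)$ is the set of graded identities of a $G$-graded algebra $A$. $\Phi_d:F\langle X|\mathbb{Z}\rangle\to F\langle X|d\mathbb{Z}\rangle$ is the algebra isomorphism $x_i^n\mapsto x_i^{dn}$. *)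

From HB Require Import structures.
From mathcomp Require Import all_boot all_order all_algebra.
From mathcomp Require Import finmap.
Set Implicit Arguments. Unset Strict Implicit. Unset Printing Implicit Defensive.
Import Order.TTheory GRing.Theory Num.Theory.
Local Open Scope ring_scope.
Local Open Scope fset_scope.

(* An element of E is a formal finite F-linear combination of basis monomials
   e_S = e_{s1} ... e_{sk} (s1 < ... < sk), S a finite set of naturals.
   Two formal sums denote the same element iff their coefficient functions agree. *)
Definition gelt (F : fieldType) := seq (F * {fset nat}).

Definition gcoef (F : fieldType) (a : gelt F) (S : {fset nat}) : F :=
  \sum_(p <- a | p.2 == S) p.1.

(* e_S * e_T = (-1)^#{(s,t) in S x T | t < s} e_(S u T) if S, T disjoint, else 0 *)
Definition gsign (F : fieldType) (S T : {fset nat}) : F :=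
  (-1) ^+ (\sum_(s <- S) \sum_(t <- T) (t < s)%N)%N.

Definition gmulmon (F : fieldType) (p q : F * {fset nat}) : gelt F :=
  if fdisjoint p.2 q.2 then [:: (p.1 * q.1 * gsign F p.2 q.2, p.2 `|` q.2)]
  else [::].

Definition gmul (F : fieldType) (a b : gelt F) : gelt F :=
  flatten [seq gmulmon p q | p <- a, q <- b].

Definition gone (F : fieldType) : gelt F := [:: (1, fset0)].

Definition gscale (F : fieldType) (c : F) (a : gelt F) : gelt F :=
  [seq (c * p.1, p.2) | p <- a].

Definition gprod (F : fieldType) (l : seq (gelt F)) : gelt F := foldr (@gmul F) (gone F) l.

Definition gzero (F : fieldType) (a : gelt F) : Prop := forall S, gcoef a S = 0.

(* lab i = j means that e_i lies in the j-th set of the splitting. *)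
Definition has_card (P : pred nat) (v : option nat) : Prop :=
  match v with
  | Some k => exists s : seq nat, [/\ uniq s, size s = k & forall i, P i = (i \in s)]
  | None => forall m, exists2 i, (m <= i)%N & P i
  end.

(* the splitting of {e_i} into n sets of cardinalities v_j (None = infinity) *)
Definition splitting (n : nat) (v : 'I_n -> option nat) (lab : nat -> 'I_n) : Prop :=
  forall j, has_card (fun i => lab i == j) (v j).

Definition gdeg (n : nat) (s : 'I_n -> int) (lab : nat -> 'I_n) (S : {fset nat}) : int :=
  \sum_(i <- S) s (lab i).

Definition ghomog (F : fieldType) (n : nat) (s : 'I_n -> int) (lab : nat -> 'I_n)
  (a : gelt F) (g : int) : Prop :=
  forall S, gcoef a S != 0 -> gdeg s lab S = g.

(* variable x_i^g is the pair (i, g); a polynomial is a formal finite linear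
   combination of words, identified through its coefficient function pcoef. *)
Definition gvar := (nat * int)%type.
Definition word := seq gvar.
Definition fpoly (F : fieldType) := seq (F * word).

Definition pcoef (F : fieldType) (f : fpoly F) (w : word) : F :=
  \sum_(p <- f | p.2 == w) p.1.

Definition in_FX (F : fieldType) (G : pred int) (f : fpoly F) : Prop :=
  forall w, pcoef f w != 0 -> all (fun x => G x.2) w.

Definition multilinear (F : fieldType) (f : fpoly F) : Prop :=
  forall w w', pcoef f w != 0 -> pcoef f w' != 0 -> uniq w /\ perm_eq w w'.

Definition Phi (F : fieldType) (d : int) (f : fpoly F) : fpoly F :=
  [seq (p.1, [seq (x.1, d * x.2) | x <- p.2]) | p <- f].

Definition peval (F : fieldType) (f : fpoly F) (phi : gvar -> gelt F) : gelt F :=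
  flatten [seq gscale p.1 (gprod [seq phi x | x <- p.2]) | p <- f].

Definition graded_identity (F : fieldType) (G : pred int) (n : nat)
  (s : 'I_n -> int) (lab : nat -> 'I_n) (f : fpoly F) : Prop :=
  in_FX G f /\
  forall phi : gvar -> gelt F, (forall x, ghomog s lab (phi x) x.2) -> gzero (peval f phi).

Definition gcd_all (n : nat) (r : 'I_n -> int) : int := \big[gcdz/0]_(j < n) r j.

(* Phi_d is a bijection between F<X|Z> and F<X|dZ> that multiplies every degree
   by d, and since d divides every r_j, the dZ-degree of a Grassmann monomial in
   the grading by r is exactly d times its degree in the grading by r/d. Hence
   graded substitutions for the two gradings correspond to each other, and f and
   Phi_d(f) evaluate to the same elements of E. *)

From HB Require Import structures.
From mathcomp Require Import all_boot all_order all_algebra.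
From mathcomp Require Import finmap.
Import Order.TTheory GRing.Theory Num.Theory.
Local Open Scope ring_scope.

Lemma dvdz_big_gcd (I : eqType) (r : I -> int) (s : seq I) j :
  j \in s -> (\big[gcdz/0]_(k <- s) r k %| r j)%Z.
Proof.
elim: s => [//|a s IHs]; rewrite in_cons big_cons => /orP[/eqP ->|j_s].
  exact: dvdz_gcdl.
exact: dvdz_trans (dvdz_gcdr _ _) (IHs j_s).
Qed.

Lemma gcd_all_dvd n (r : 'I_n -> int) j : (gcd_all r %| r j)%Z.
Proof. by apply: dvdz_big_gcd; rewrite mem_index_enum. Qed.

Lemma ghomog0 (F : fieldType) n (s : 'I_n -> int) lab g :
  ghomog s lab ([::] : gelt F) g.
Proof. by move=> S; rewrite /gcoef big_nil eqxx. Qed.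

Lemma eq_peval (F : fieldType) (f : fpoly F) phi psi :
  phi =1 psi -> peval f phi = peval f psi.
Proof.
move=> eq_phi; rewrite /peval; congr flatten; apply: eq_map => p /=.
by congr (gscale _ (gprod _)); apply: eq_map.
Qed.

Lemma peval_Phi (F : fieldType) d (f : fpoly F) phi :
  peval (Phi d f) phi = peval f (fun x => phi (x.1, d * x.2)).
Proof.
rewrite /peval /Phi -map_comp; congr flatten; apply: eq_map => p /=.
by rewrite -map_comp.
Qed.

Lemma in_FX_Phi (F : fieldType) d (f : fpoly F) :
  in_FX (fun g : int => (d %| g)%Z) (Phi d f).
Proof.
move=> w; rewrite /pcoef /Phi big_map.
have [/hasP[p _ /eqP <-] _|no_w] :=
  boolP (has (fun p : F * word => [seq (x.1, d * x.2) | x <- p.2] == w) f).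
  by apply/allP => _ /mapP[x _ ->]; apply: dvdz_mulr.
by rewrite big_hasC // eqxx.
Qed.

Definition subst_divz {F : fieldType} (d : int) (psi : gvar -> gelt F) (x : gvar) :=
  if (d %| x.2)%Z then psi (x.1, (x.2 %/ d)%Z) else [::].

Section GradingRescaling.

Variables (F : fieldType) (n : nat) (s : 'I_n -> int) (lab : nat -> 'I_n) (d : int).
Hypotheses (d_neq0 : d != 0) (d_dvd_s : forall j, (d %| s j)%Z).

Lemma gdeg_divz S : gdeg s lab S = d * gdeg (fun j => (s j %/ d)%Z) lab S.
Proof.
rewrite /gdeg big_distrr; apply: eq_bigr => i _.
by rewrite [RHS]mulrC divzK.
Qed.

Lemma ghomog_divz (a : gelt F) g :
  ghomog (fun j => (s j %/ d)%Z) lab a g <-> ghomog s lab a (d * g).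
Proof.
by split=> homog_a S /homog_a; rewrite gdeg_divz; [move=> -> | move/(mulfI d_neq0)].
Qed.

Lemma subst_divzM (psi : gvar -> gelt F) i m : subst_divz d psi (i, d * m) = psi (i, m).
Proof. by rewrite /subst_divz /= dvdz_mulr // mulrC mulzK. Qed.

Lemma ghomog_subst_divz {psi : gvar -> gelt F} :
  (forall x, ghomog (fun j => (s j %/ d)%Z) lab (psi x) x.2) ->
  forall x, ghomog s lab (subst_divz d psi x) x.2.
Proof.
move=> homog_psi [i g]; rewrite /subst_divz /=.
case: ifP => [d_g|_]; last exact: ghomog0.
by have /ghomog_divz := homog_psi (i, (g %/ d)%Z); rewrite /= mulrC divzK.
Qed.

Lemma graded_identity_Phi (f : fpoly F) :
  graded_identity predT (fun j => (s j %/ d)%Z) lab f <->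
  graded_identity (fun g : int => (d %| g)%Z) s lab (Phi d f).
Proof.
split=> [[_ id_f]|[_ id_Phi_f]]; split.
- exact: in_FX_Phi.
- move=> phi homog_phi; rewrite peval_Phi; apply: id_f => x.
  by apply/ghomog_divz; apply: (homog_phi (x.1, d * x.2)).
- by move=> w _; apply/allP.
- move=> psi homog_psi.
  have := id_Phi_f _ (ghomog_subst_divz homog_psi).
  by rewrite peval_Phi (@eq_peval _ _ _ psi) // => -[i g]; rewrite subst_divzM.
Qed.

End GradingRescaling.

Theorem lemma5p4 (F : fieldType) (n : nat) (r : 'I_n -> int)
  (v : 'I_n -> option nat) (lab : nat -> 'I_n) (f : fpoly F) :
  [pchar F] =i pred0 ->
  injective r ->
  splitting v lab ->
  gcd_all r != 0 ->
  multilinear f ->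
  (graded_identity predT (fun j => (r j %/ gcd_all r)%Z) lab f <->
   graded_identity (fun g : int => (gcd_all r %| g)%Z) r lab (Phi (gcd_all r) f)).
Proof.
move=> _ _ _ gcd_neq0 _.
by apply: graded_identity_Phi => //; apply: gcd_all_dvd.
Qed.
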